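(* For every even positive integer $n$, there exist a binary NFA with $n$ states and a binary DFA with $n$ states such that there is a tower of height $n^2-n+1$ between their languages and there is no infinite tower between their languages.
   Context: Binary means over a two-letter alphabet. For strings $v=a_1\cdots a_k$ and $w$, $v\preccurlyeq w$ if $w\in\Sigma^*a_1\Sigma^*a_2\Sigma^*\cdots\Sigma^*a_k\Sigma^*$. A sequence $(w_i)_{i=1}^r$ of strings is a tower between languages $K$ and $L$ if $w_1\in K\cup L$ and for all $i=1,\dots,r-1$: $w_i\preccurlyeq w_{i+1}$, $w_i\in K$ implies $w_{i+1}\in L$, and $w_i\in L$ implies $w_{i+1}\in K$; $r$ is its height. An infinite tower is an infinite sequence with the same properties. *)

From mathcomp Require Import all_boot.
Set Implicit Arguments. Unset Strict Implicit. Unset Printing Implicit Defensive.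

Definition lang := seq bool -> Prop.

(* The subsequence (scattered subword) order v ≼ w is mathcomp's [subseq v w]. *)

Record nfa (n : nat) := NFA {
  nfa_init : {set 'I_n};
  nfa_final : {set 'I_n};
  nfa_trans : 'I_n -> bool -> {set 'I_n} }.

Definition nfa_reach n (A : nfa n) (w : seq bool) : {set 'I_n} :=
  foldl (fun (S : {set 'I_n}) (a : bool) => \bigcup_(q in S) nfa_trans A q a) (nfa_init A) w.

Definition nfa_lang n (A : nfa n) : lang :=
  fun w => [exists q, (q \in nfa_reach A w) && (q \in nfa_final A)].

Record dfa (n : nat) := DFA {
  dfa_init : 'I_n;
  dfa_final : {set 'I_n};
  dfa_trans : 'I_n -> bool -> 'I_n }.

Definition dfa_lang n (B : dfa n) : lang :=
  fun w => foldl (dfa_trans B) (dfa_init B) w \in dfa_final B.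

(* A finite tower (w_1,...,w_r) between K and L, represented by the list ws;
   its height is size ws (r >= 1). Index i below is 0-based. *)
Definition tower (K L : lang) (ws : seq (seq bool)) : Prop :=
  ws <> [::] /\
  (K (nth [::] ws 0) \/ L (nth [::] ws 0)) /\
  forall i, i.+1 < size ws ->
    [/\ subseq (nth [::] ws i) (nth [::] ws i.+1),
        K (nth [::] ws i) -> L (nth [::] ws i.+1) &
        L (nth [::] ws i) -> K (nth [::] ws i.+1)].

Definition inf_tower (K L : lang) (w : nat -> seq bool) : Prop :=
  (K (w 0) \/ L (w 0)) /\
  forall i,
    [/\ subseq (w i) (w i.+1),
        K (w i) -> L (w i.+1) &
        L (w i) -> K (w i.+1)].

From mathcomp Require Import all_boot zify.
Set Implicit Arguments. Unset Strict Implicit. Unset Printing Implicit Defensive.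

(* Write n = m + 1 with m odd. The NFA accepts the words with fewer than m ones
   ending in an odd number of zeros, the DFA those ending in an even number
   (below m) of zeros. Along a tower the number of ones never decreases and
   stays below m; while it is constant the number of trailing zeros cannot
   decrease (a subword with as many ones has at most as many trailing zeros)
   and changes parity at each step, so it increases strictly, and it stays
   below m. Hence the pair (ones, trailing zeros) increases lexicographically
   in a finite range, and no tower is infinite. The prefixes of (0^m 1)^m
   alternate between the two languages and form a tower of height
   m(m+1) + 1 = n^2 - n + 1. *)

Lemma inf_tower_mem (K L : lang) (w : nat -> seq bool) :
  inf_tower K L w -> forall i, K (w i) \/ L (w i).
Proof.
case=> w0 step; elim=> [//|i [Kwi|Lwi]]; have [_ KL LK] := step i.
- by right; apply: KL.
- by left; apply: LK.
Qed.

Lemma no_inf_tower_of_potential (K L : lang) (phi : seq bool -> nat) (b : nat) :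
  (forall u, phi u <= b) ->
  (forall u v, subseq u v -> K u /\ L v \/ L u /\ K v -> phi u < phi v) ->
  ~ exists w, inf_tower K L w.
Proof.
move=> phi_le phi_lt [w tow]; have [_ step] := tow.
have phi_ge i : i <= phi (w i).
  elim: i => [//|i IH]; apply: leq_ltn_trans IH _.
  have [sub KL LK] := step i.
  apply: phi_lt sub _; case: (inf_tower_mem tow i) => [Kw|Lw].
  - by left; split; last exact: KL.
  - by right; split; last exact: LK.
by have := leq_trans (phi_ge b.+1) (phi_le _); rewrite ltnn.
Qed.

Lemma tower_prefixes (K L : lang) (w : seq bool) :
  (forall i, i <= size w -> (K (take i w) <-> odd i) /\ (L (take i w) <-> ~~ odd i)) ->
  tower K L (mkseq (take^~ w) (size w).+1).
Proof.
move=> KL_parity; split=> //; split.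
  by right; rewrite nth_mkseq //; apply/(KL_parity 0 (leq0n _)).2.
move=> i; rewrite size_mkseq => lt_i.
rewrite !nth_mkseq ?(ltnW lt_i) //.
have [Ki Li] := KL_parity i (ltnW lt_i); have [Ki1 Li1] := KL_parity i.+1 lt_i.
split.
- by rewrite (take_nth false lt_i) subseq_rcons.
- by move/Ki => odd_i; apply/Li1; rewrite /= odd_i.
- by move/Li => even_i; apply/Ki1; rewrite /= even_i.
Qed.

Definition ones (w : seq bool) := count_mem true w.
Definition trailing_zeros (w : seq bool) := index true (rev w).

Lemma ones_rcons w x : ones (rcons w x) = ones w + x.
Proof. by rewrite /ones -cats1 count_cat /=; case: x. Qed.

Lemma trailing_zeros_rcons w x :
  trailing_zeros (rcons w x) = if x then 0 else (trailing_zeros w).+1.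
Proof. by rewrite /trailing_zeros rev_rcons /=; case: x. Qed.

Lemma index_subseq_count (T : eqType) (x : T) (s t : seq T) :
  subseq s t -> count_mem x s = count_mem x t -> index x s <= index x t.
Proof.
elim: t s => [|y t IH] [|z s] //=.
case: eqP => [-> sub_st|_ sub_zst]; case: (eqVneq y x) => [eq_yx|neq_yx] //=.
- by rewrite !add0n => /(IH _ sub_st).
- have := leq_count_subseq (pred1 x) sub_zst; rewrite /= add1n => le_zst eq_zst.
  by move: le_zst; rewrite eq_zst ltnn.
- by rewrite add0n => /(IH _ sub_zst) /leqW.
Qed.

Lemma trailing_zeros_subseq u v :
  subseq u v -> ones u = ones v -> trailing_zeros u <= trailing_zeros v.
Proof.
by move=> sub_uv eq_ones; apply: index_subseq_count; rewrite ?subseq_rev // !count_rev.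
Qed.

Section Automata.
Variable m : nat.

Definition even_tail_dfa : dfa m.+1 :=
  DFA ord0 [set q : 'I_m.+1 | ~~ odd q]
      (fun q x => if x then ord0 else inord (minn q.+1 m)).

Lemma even_tail_dfa_run w :
  foldl (dfa_trans even_tail_dfa) (dfa_init even_tail_dfa) w = minn (trailing_zeros w) m :> nat.
Proof.
elim/last_ind: w => [|w x IH]; first by rewrite /trailing_zeros /=; lia.
rewrite foldl_rcons trailing_zeros_rcons /=; case: x => /=; first lia.
by rewrite inordK IH; lia.
Qed.

Lemma even_tail_dfaP w : odd m ->
  dfa_lang even_tail_dfa w <-> trailing_zeros w < m /\ ~~ odd (trailing_zeros w).
Proof.
move=> odd_m; rewrite /dfa_lang in_set even_tail_dfa_run /minn.
case: ltnP => le_m; first by split=> [->|[]].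
by rewrite odd_m; split=> // -[]; lia.
Qed.

(* States below m - 1 count the ones read so far; the states m - 1 and m guess
   that no more ones follow and record the parity of the trailing zeros. *)
Definition odd_tail_nfa : nfa m.+1 :=
  NFA [set q : 'I_m.+1 | (q == 0 :> nat) || (q == m.-1 :> nat)] [set ord_max]
      (fun q x =>
         if q < m.-1 then
           if x then [set r : 'I_m.+1 | (r == q.+1 :> nat) || (r == m.-1 :> nat)] else [set q]
         else if x then set0
         else if q == m.-1 :> nat then [set ord_max] else [set inord m.-1]).

Lemma odd_tail_nfa_reach w (r : 'I_m.+1) : 0 < m ->
  (r \in nfa_reach odd_tail_nfa w) =
  (r == ones w :> nat) && (ones w < m.-1) ||
  (ones w <= m.-1) && (r == m.-1 + odd (trailing_zeros w) :> nat).
Proof.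
move=> m_gt0; elim/last_ind: w r => [|w x IH] r.
  by rewrite in_set /ones /trailing_zeros /= addn0; case: (nat_of_ord r); case: (m.-1).
rewrite /nfa_reach foldl_rcons -/(nfa_reach odd_tail_nfa w).
rewrite ones_rcons trailing_zeros_rcons.
apply/bigcupP/idP => [[q]|].
- rewrite IH /=; case: x; rewrite /= ?addn0 ?addn1 => reach_q.
  + case: ifP => lt_q; last by rewrite in_set0.
    by rewrite in_set => /orP[] /eqP ->; move: reach_q lt_q; case: odd => /=; lia.
  + case: ifP => lt_q; first by rewrite in_set1 => /eqP ->; move: reach_q lt_q; case: odd => /=; lia.
    case: ifP => /eqP eq_q; rewrite in_set1 => /eqP -> /=.
    * by move: reach_q lt_q eq_q; case: odd => /=; lia.
    * by rewrite inordK; move: reach_q lt_q eq_q (ltn_ord q); case: odd => /=; lia.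
- case: x; rewrite /= ?addn0 ?addn1 => reach_r.
  + exists (inord (ones w)); first by rewrite IH inordK /=; lia.
    by rewrite inordK ?ifT ?in_set; move: reach_r; lia.
  + case/orP: reach_r => [/andP[/eqP r_eq lt_c] | /andP[le_c /eqP r_eq]].
    * by exists r; [rewrite IH r_eq eqxx lt_c | rewrite ifT ?in_set1 // r_eq].
    * exists (inord (m.-1 + odd (trailing_zeros w))).
        by rewrite IH inordK; case: odd => /=; lia.
      rewrite inordK; last by case: odd => /=; lia.
      rewrite ifF; last by case: odd => /=; lia.
      move: r_eq; case: odd => /= r_eq; case: ifP => /eqP cond;
        apply/set1P/val_inj; rewrite /= r_eq ?inordK; lia.
Qed.

Lemma odd_tail_nfaP w : 0 < m ->
  nfa_lang odd_tail_nfa w <-> ones w < m /\ odd (trailing_zeros w).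
Proof.
move=> m_gt0; split.
- case/existsP=> q /andP[]; rewrite odd_tail_nfa_reach // in_set1 => reach_q /eqP q_max.
  by move: reach_q; rewrite q_max /=; case: odd => /=; lia.
- case=> lt_m odd_tz; apply/existsP; exists ord_max.
  by rewrite odd_tail_nfa_reach // in_set1 eqxx odd_tz /= andbT; lia.
Qed.

End Automata.

Lemma ltn_radix r a b x y : a < b -> x < r -> a * r + x < b * r + y.
Proof. by move=> lt_ab lt_xr; apply: leq_trans (leq_addr _ _); nia. Qed.

Definition tower_potential (m : nat) (u : seq bool) :=
  minn (ones u) m * m.+1 + minn (trailing_zeros u) m.

Lemma tower_potential_le m u : tower_potential m u <= m * m.+1 + m.
Proof. by apply: leq_add; [rewrite leq_mul2r geq_minr orbT | exact: geq_minr]. Qed.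

Lemma tower_potential_lt m u v : odd m -> subseq u v ->
  nfa_lang (odd_tail_nfa m) u /\ dfa_lang (even_tail_dfa m) v \/
  dfa_lang (even_tail_dfa m) u /\ nfa_lang (odd_tail_nfa m) v ->
  tower_potential m u < tower_potential m v.
Proof.
move=> odd_m sub_uv KL; have m_gt0 : 0 < m by move: odd_m; case: m {KL}.
have le_ones : ones u <= ones v := leq_count_subseq _ sub_uv.
have [lt_ones parity tz_small] : [/\ ones u < m,
    odd (trailing_zeros u) != odd (trailing_zeros v) &
    trailing_zeros u < m \/ trailing_zeros v < m].
  case: KL => [[/(odd_tail_nfaP _ m_gt0) [lt_u odd_u] /(even_tail_dfaP _ odd_m) [lt_v even_v]]
              |[/(even_tail_dfaP _ odd_m) [lt_u even_u] /(odd_tail_nfaP _ m_gt0) [lt_v odd_v]]].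
  - by split; [ | rewrite odd_u | right].
  - by split; [exact: leq_ltn_trans lt_v | rewrite odd_v (negbTE even_u) | left].
rewrite /tower_potential (minn_idPl (ltnW lt_ones)).
case: (ltnP (ones u) (ones v)) => [lt_uv | ge_uv].
  by apply: ltn_radix; rewrite ?leq_min ?lt_uv ?lt_ones ?ltnS ?geq_minr.
have eq_ones : ones u = ones v by apply/eqP; rewrite eqn_leq le_ones ge_uv.
have lt_tz : trailing_zeros u < trailing_zeros v.
  rewrite ltn_neqAle trailing_zeros_subseq // andbT.
  by apply: contraNneq parity => ->.
by rewrite -eq_ones (minn_idPl (ltnW lt_ones)) ltn_add2l; case: tz_small; lia.
Qed.

(* The word (0^m 1)^m, reading [false] as 0 and [true] as 1. *)
Definition staircase_word (m : nat) : seq bool :=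
  mkseq (fun i => i %% m.+1 == m) (m * m.+1).

Lemma staircase_prefix m i : i <= m * m.+1 ->
  ones (take i (staircase_word m)) = i %/ m.+1 /\
  trailing_zeros (take i (staircase_word m)) = i %% m.+1.
Proof.
elim: i => [|i IH] lt_i; first by rewrite take0 div0n mod0n.
have [ones_i tz_i] := IH (ltnW lt_i).
have lt_size : i < size (staircase_word m) by rewrite size_mkseq.
rewrite (take_nth false lt_size) ones_rcons trailing_zeros_rcons nth_mkseq // ones_i tz_i.
have i1_eq : i.+1 = i %/ m.+1 * m.+1 + (i %% m.+1).+1 by rewrite addnS -divn_eq.
have le_mod : i %% m.+1 <= m by rewrite -ltnS ltn_mod.
case: eqP => [mod_eq | mod_neq] /=.
- by rewrite i1_eq mod_eq -mulSnr mulnK // modnMl addn1.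
- have lt_mod : (i %% m.+1).+1 < m.+1 by rewrite ltnS ltn_neqAle le_mod andbT; apply/eqP.
  by rewrite i1_eq divnMDl // modnMDl (divn_small lt_mod) (modn_small lt_mod) !addn0.
Qed.

Lemma staircase_prefix_lang m i : odd m -> i <= m * m.+1 ->
  (nfa_lang (odd_tail_nfa m) (take i (staircase_word m)) <-> odd i) /\
  (dfa_lang (even_tail_dfa m) (take i (staircase_word m)) <-> ~~ odd i).
Proof.
move=> odd_m le_i; have m_gt0 : 0 < m by move: odd_m; case: m {le_i}.
have odd_i : odd (i %% m.+1) = odd i by rewrite odd_mod //= odd_m.
have le_mod : i %% m.+1 <= m by rewrite -ltnS ltn_mod.
rewrite odd_tail_nfaP // even_tail_dfaP //; have [-> ->] := staircase_prefix le_i.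
rewrite odd_i ltn_divLR //; split.
- split=> [[] // | odd_i']; split=> //; rewrite ltn_neqAle le_i andbT.
  by apply: contraTneq odd_i' => ->; rewrite oddM /= andbN.
- split=> [[] // | even_i]; split=> //; rewrite ltn_neqAle le_mod andbT.
  by apply: contraTneq even_i => mod_m; rewrite -odd_i mod_m odd_m.
Qed.

Theorem theorem8 (n : nat) (n_pos : 0 < n) (n_even : ~~ odd n) :
  exists (A : nfa n) (B : dfa n),
    (exists ws : seq (seq bool),
        tower (nfa_lang A) (dfa_lang B) ws /\ size ws = n ^ 2 - n + 1) /\
    ~ (exists w : nat -> seq bool, inf_tower (nfa_lang A) (dfa_lang B) w).
Proof.
case: n n_pos n_even => [//|m] _; rewrite /= negbK => odd_m.
exists (odd_tail_nfa m), (even_tail_dfa m); split.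
- exists (mkseq (take^~ (staircase_word m)) (size (staircase_word m)).+1); split.
    apply: tower_prefixes => i; rewrite size_mkseq; exact: staircase_prefix_lang.
  by rewrite !size_mkseq; nia.
- apply: (no_inf_tower_of_potential (tower_potential_le m)) => u v.
  exact: tower_potential_lt.
Qed.
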